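(* Let $G=(V,E)$ be a finite simple graph with at least one edge and no isolated vertices. The following are equivalent: (1) $G$ is uniformly dense; (2) $\operatorname{rank}(L(G))-\operatorname{rank}(L(G|A))\le \frac{|E|-|A|}{\rho(G)}$ for all nonempty $A\subseteq E$; (3) $\frac{n_0(L^1(G|A))}{|A|}\le\frac{n_0(L^1(G))}{|E|}$ for all nonempty $A\subseteq E$.
   Context: For $A\subseteq E$, $c(A)$ is the number of components of $(V,A)$, $\operatorname{rank}(A)=|V|-c(A)$, $\rho(A)=|A|/\operatorname{rank}(A)$, $\rho(G)=\rho(E)$; $G$ is uniformly dense if $\rho(A)\le\rho(G)$ for all nonempty $A$. $G|A$ is the graph obtained from $(V,A)$ by removing all isolated vertices. The normalized Laplacian $L(G)$ acts on functions $f:V\to\mathbb{R}$ by $Lf(v)=f(v)-\frac{1}{\deg v}\sum_{u:\{u,v\}\in E}f(u)$ (matrix $I-AD^{-1}$); $\operatorname{rank}$ of $L$ is the linear-algebraic rank. Fix an arbitrary orientation of each edge (an input and an output endpoint). The edge Laplacian $L^1(G)$ acts on $\gamma:E\to\mathbb{R}$ by, for $e$ with input $v$ and output $w$, $L^1\gamma(e)=\frac{\sum_{e_1:\,v\text{ input of }e_1}\gamma(e_1)-\sum_{e_2:\,v\text{ output of }e_2}\gamma(e_2)}{\deg v}-\frac{\sum_{e_1':\,w\text{ input of }e_1'}\gamma(e_1')-\sum_{e_2':\,w\text{ output of }e_2'}\gamma(e_2')}{\deg w}$. $n_0(\cdot)$ denotes the multiplicity of $0$ as an eigenvalue. *)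

From HB Require Import structures.
From mathcomp Require Import all_boot all_order all_algebra.
Set Implicit Arguments. Unset Strict Implicit. Unset Printing Implicit Defensive.
Import Order.TTheory GRing.Theory Num.Theory.
Local Open Scope ring_scope.

(* A finite simple graph on vertex type V, together with a fixed (arbitrary)
   orientation, is represented by a set E of ordered pairs (input, output):
   no loops and no pair stored in both directions.  The underlying undirected
   edge of (v,w) is {v,w}.  Subsets A of E inherit the orientation. *)
Section Graph.
Variable V : finType.

Definition oriented_simple (E : {set V * V}) : Prop :=
  forall x y, (x, y) \in E -> x != y /\ (y, x) \notin E.

Definition adj (A : {set V * V}) : rel V :=
  fun x y => ((x, y) \in A) || ((y, x) \in A).

Definition deg (A : {set V * V}) (v : V) : nat :=
  #|[set a in A | (a.1 == v) || (a.2 == v)]|.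

(* vertex set of G|A: non-isolated vertices of (V, A) *)
Definition vsupp (A : {set V * V}) : {set V} := [set v | 0 < deg A v]%N.

Definition ncomp (A : {set V * V}) : nat := n_comp (adj A) [pred x : V | true].

Definition grank (A : {set V * V}) : nat := (#|V| - ncomp A)%N.

Definition rho (R : realFieldType) (A : {set V * V}) : R :=
  #|A|%:R / (grank A)%:R.

Definition uniformly_dense (R : realFieldType) (E : {set V * V}) : Prop :=
  forall A : {set V * V}, A \subset E -> A != set0 -> rho R A <= rho R E.

(* Normalized Laplacian of the graph with vertex set S and edge set A,
   as the matrix of f |-> (v |-> f v - (1/deg v) sum_{u ~ v} f u),
   vertices of S indexed via enum_val. *)
Definition nlap (R : realFieldType) (S : {set V}) (A : {set V * V})
  : 'M[R]_#|S| :=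
  \matrix_(i, j)
    ((i == j)%:R - (adj A (enum_val i) (enum_val j))%:R
                    / (deg A (enum_val i))%:R).

Definition LapG (R : realFieldType) (E : {set V * V}) := nlap R [set: V] E.
Definition LapR (R : realFieldType) (A : {set V * V}) := nlap R (vsupp A) A.

Definition inc (R : realFieldType) (x : V) (a : V * V) : R :=
  (x == a.1)%:R - (x == a.2)%:R.

(* Edge Laplacian L^1(G|A) (for A = E this is L^1(G), as G has no isolated
   vertices): for e = (v,w) (input v, output w),
   L1 g e = (sum_{e1} inc v e1 g e1)/deg v - (sum_{e1} inc w e1 g e1)/deg w. *)
Definition edgeLap (R : realFieldType) (A : {set V * V}) : 'M[R]_#|A| :=
  \matrix_(i, j)
    (inc R (enum_val i).1 (enum_val j) / (deg A (enum_val i).1)%:R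
     - inc R (enum_val i).2 (enum_val j) / (deg A (enum_val i).2)%:R).

Definition n0 (R : realFieldType) (n : nat) (M : 'M[R]_n) : nat :=
  mup 0 (char_poly M).

End Graph.

From HB Require Import structures.
From mathcomp Require Import all_boot all_order all_algebra.
From mathcomp Require Import zify ring.
Set Implicit Arguments. Unset Strict Implicit. Unset Printing Implicit Defensive.
Import Order.TTheory GRing.Theory Num.Theory.
Local Open Scope ring_scope.

(* Let B be the oriented incidence matrix of G|A and D its diagonal degree
   matrix.  Then L(G|A) = D^-1 B B^T and L^1(G|A) = B^T D^-1 B, so both have
   the rank of B, which is rank(A) = |V| - c(A): the left kernel of B consists
   of the functions that are constant on components.  Since L^1(G|A) is
   symmetric, 0 is a semisimple eigenvalue and n_0(L^1(G|A)) = |A| - rank(A).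
   After clearing denominators, each of the three conditions then says
   |A| rank(E) <= rank(A) |E|. *)

Section CharPolyMul.
Variable F : fieldType.

(* Sylvester's identity, from the two block factorisations of
   [[X, C], [D, 1]]. *)
Lemma char_poly_mulmxC n r (C : 'M[F]_(n, r)) (D : 'M[F]_(r, n)) :
  'X^r * char_poly (C *m D) = 'X^n * char_poly (D *m C).
Proof.
set Cp := map_mx polyC C; set Dp := map_mx polyC D.
have eCD : char_poly (C *m D) = \det ('X%:M - Cp *m Dp).
  by rewrite /char_poly /char_poly_mx map_mxM.
have eDC : char_poly (D *m C) = \det ('X%:M - Dp *m Cp).
  by rewrite /char_poly /char_poly_mx map_mxM.
set M := block_mx ('X%:M : 'M_n) Cp Dp (1%:M : 'M_r).
have detM_CD : 'X^r * \det M = char_poly (C *m D) * 'X^r.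
  have := det_mulmx (block_mx 1%:M (- Cp) 0 ('X%:M)) M.
  rewrite mulmx_block det_ublock det1 mul1r (@det_scalar _ r) => <-.
  rewrite (@mul1mx _ n n) (@mul1mx _ n r) (@mul0mx _ r n n) (@mul0mx _ r n r).
  rewrite (@mulmx1 _ r r) (@mulmx1 _ n r) !add0r mulNmx addrN.
  by rewrite det_lblock eCD (@det_scalar _ r).
have detM_DC : 'X^r * \det M = 'X^n * char_poly (D *m C).
  have := det_mulmx (block_mx 1%:M 0 (- Dp) ('X%:M)) M.
  rewrite mulmx_block det_lblock det1 mul1r (@det_scalar _ r) => <-.
  rewrite (@mul1mx _ n n) (@mul1mx _ n r) (@mul0mx _ n r n) (@mul0mx _ n r r).
  rewrite (@mulmx1 _ r r) !addr0 !mulNmx mul_mx_scalar mul_scalar_mx addNr.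
  by rewrite det_ublock eDC (@det_scalar _ n) addrC.
by rewrite -detM_DC detM_CD mulrC.
Qed.

Lemma mup0_XnM k (p : {poly F}) : p != 0 -> mup 0 ('X^k * p) = (k + mup 0 p)%N.
Proof.
move=> p0; have Xk0 : 'X^k != 0 :> {poly F} by rewrite monic_neq0 ?monicXn.
rewrite mupM //.
by have := @mup_XsubCX F k 0 0; rewrite subr0 eqxx => ->.
Qed.

(* Through a full-rank factorisation M = C D, the hypothesis makes D C
   invertible, and Sylvester's identity moves the characteristic polynomial
   from D C, which does not vanish at 0, to M. *)
Lemma mup0_char_poly n (M : 'M[F]_n) :
  \rank (M *m M) = \rank M -> mup 0 (char_poly M) = (n - \rank M)%N.
Proof.
move=> rankMM; have eM := mulmx_base M.
set C := col_base M in eM; set D := row_base M in eM.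
have rankDC : \rank (D *m C) = \rank M.
  have eMM : M *m M = C *m (D *m C) *m D by rewrite mulmxA -mulmxA eM.
  apply/eqP; rewrite eqn_leq rank_leq_row -{1}rankMM eMM.
  exact: leq_trans (mxrankM_maxl _ _) (mxrankM_maxr _ _).
have DC_unit : D *m C \in unitmx by rewrite -row_free_unit /row_free rankDC.
have nroot : ~~ root (char_poly (D *m C)) 0.
  rewrite /root horner_coef0 char_poly_det mulf_eq0 signr_eq0 /=.
  by rewrite -unitfE -unitmxE.
have := congr1 (mup 0) (char_poly_mulmxC C D); rewrite eM.
rewrite !mup0_XnM ?monic_neq0 ?char_poly_monic // (mupNroot nroot) addn0 => e.
by rewrite -[X in _ = (X - _)%N]e addKn.
Qed.

End CharPolyMul.

Section PositiveDiagonalForm.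
Variable R : realFieldType.

Lemma diag_form_eq0 n (v w : 'rV[R]_n) : (forall j, 0 < w 0 j) ->
  (v *m diag_mx w *m v^T) 0 0 = 0 -> v = 0.
Proof.
move=> w_gt0 vwv0.
have sum0 : \sum_j w 0 j * v 0 j ^+ 2 = 0.
  rewrite -[RHS]vwv0 mul_mx_diag mxE; apply: eq_bigr => j _.
  by rewrite !mxE mulrCA -mulrA.
apply/rowP => j; rewrite mxE.
have terms0 := psumr_eq0P
  (fun i _ => mulr_ge0 (ltW (w_gt0 i)) (sqr_ge0 (v 0 i))) sum0.
have /eqP := terms0 j isT.
by rewrite mulf_eq0 (gt_eqF (w_gt0 j)) sqrf_eq0 => /eqP.
Qed.

Lemma mxrank_mul_diag_tr m n (B : 'M[R]_(m, n)) (w : 'rV[R]_n) :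
  (forall j, 0 < w 0 j) -> \rank (B *m diag_mx w *m B^T) = \rank B.
Proof.
move=> w_gt0; apply/eqP; rewrite eqn_leq; apply/andP; split.
  exact: leq_trans (mxrankM_maxl _ _) (mxrankM_maxl _ _).
have ker_sub : (kermx (B *m diag_mx w *m B^T) <= kermx B)%MS.
  apply/row_subP => i; rewrite sub_kermx; set u := row i _.
  have : u *m (B *m diag_mx w *m B^T) = 0 by rewrite -row_mul mulmx_ker row0.
  move=> uM0; apply/eqP/(diag_form_eq0 w_gt0).
  by rewrite trmx_mul !mulmxA; rewrite !mulmxA in uM0; rewrite uM0 mul0mx mxE.
have := mxrankS ker_sub; rewrite !mxrank_ker.
have := rank_leq_row B; have := rank_leq_row (B *m diag_mx w *m B^T).
lia.
Qed.

Lemma mxrank_mul_tr m n (B : 'M[R]_(m, n)) : \rank (B *m B^T) = \rank B.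
Proof.
have := @mxrank_mul_diag_tr _ _ B (const_mx 1).
by rewrite diag_const_mx mulmx1; apply=> j; rewrite mxE ltr01.
Qed.

End PositiveDiagonalForm.

Section Incidence.
Variables (R : realFieldType) (V : finType).
Implicit Types (S : {set V}) (A : {set V * V}).

Lemma oriented_simple_sub E A : oriented_simple E -> A \subset E ->
  oriented_simple A.
Proof.
move=> osE sAE x y /(subsetP sAE) /osE [xy yxE].
by split=> //; apply: contra yxE; apply: (subsetP sAE).
Qed.

Lemma fst_vsupp A a : a \in A -> a.1 \in vsupp A.
Proof.
by move=> aA; rewrite inE; apply/card_gt0P; exists a; rewrite inE aA eqxx.
Qed.

Lemma snd_vsupp A a : a \in A -> a.2 \in vsupp A.
Proof.
by move=> aA; rewrite inE; apply/card_gt0P; exists a; rewrite inE aA eqxx orbT.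
Qed.

Lemma sum_enum (T : finType) (S : {set T}) (F : T -> R) :
  \sum_(k < #|S|) F (enum_val k) = \sum_(x in S) F x.
Proof. by rewrite (big_enum_val (A := mem S)). Qed.

Lemma sum_delta_mul (T : finType) (P : {pred T}) (F : T -> R) p : p \in P ->
  \sum_(x in P) (x == p)%:R * F x = F p.
Proof.
move=> pP; rewrite (bigD1 p) //= eqxx mul1r big1 ?addr0 //.
by move=> x /andP[_ /negPf ->]; rewrite mul0r.
Qed.

Lemma sum_delta A p : \sum_(a in A) ((a == p)%:R : R) = (p \in A)%:R.
Proof.
have [pA|pNA] := boolP (p \in A).
  by under eq_bigr do rewrite -[_%:R]mulr1; exact: (sum_delta_mul (fun=> 1)).
by rewrite big1 // => a aA; rewrite (negPf (memPn pNA _ aA)).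
Qed.

Lemma inc_mul x y (a : V * V) : a.1 != a.2 ->
  inc R x a * inc R y a =
  if x == y then ((a.1 == x) || (a.2 == x))%:R
  else - ((a == (x, y))%:R + (a == (y, x))%:R).
Proof.
case: a => a1 a2 /= a12; rewrite /inc /= !xpair_eqE !(eq_sym a1) !(eq_sym a2).
have not_both z : ~~ ((z == a1) && (z == a2)).
  by apply: contra a12 => /andP[/eqP <- /eqP <-].
have [<-|xy] := eqVneq x y.
  by move: (not_both x); case: (x == a1); case: (x == a2) => //= _;
    rewrite ?mulr1n ?mulr0n; ring.
have distinct z : ~~ ((x == z) && (y == z)).
  by apply: contra xy => /andP[/eqP -> /eqP ->].
move: (not_both x) (not_both y) (distinct a1) (distinct a2).
by case: (x == a1); case: (x == a2); case: (y == a1); case: (y == a2)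
  => //= _ _ _ _; rewrite ?mulr1n ?mulr0n; ring.
Qed.

Lemma sum_inc_mul A x y : oriented_simple A ->
  \sum_(a in A) inc R x a * inc R y a =
  if x == y then (deg A x)%:R else - (adj A x y)%:R.
Proof.
move=> osA; have a12 a : a \in A -> a.1 != a.2 by case: a => a1 a2 /osA [].
rewrite (eq_bigr _ (fun a aA => inc_mul x y (a12 a aA))).
have [->|xy] := eqVneq x y.
  rewrite -natr_sum /deg -sum1_card; congr _%:R.
  rewrite big_mkcond [RHS]big_mkcond /=; apply: eq_bigr => a _.
  by rewrite !inE; case: (a \in A); case: (_ || _).
rewrite sumrN big_split /= !sum_delta /adj.
by have := osA x y; case: ((x, y) \in A) => [/(_ isT) [_ /negPf ->]|_];
  rewrite ?addr0 ?add0r.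
Qed.

Lemma sum_inc_mulr (P : {pred V}) (F : V -> R) a : a.1 \in P -> a.2 \in P ->
  \sum_(x in P) inc R x a * F x = F a.1 - F a.2.
Proof.
move=> Pa1 Pa2; under eq_bigr do rewrite mulrBl.
by rewrite sumrB !sum_delta_mul.
Qed.

Definition incmx S A : 'M[R]_(#|S|, #|A|) :=
  \matrix_(i, j) inc R (enum_val i) (enum_val j).

Definition invdeg S A : 'rV[R]_#|S| := \row_i ((deg A (enum_val i))%:R)^-1.

Lemma invdeg_gt0 A j : 0 < invdeg (vsupp A) A 0 j.
Proof. by rewrite mxE invr_gt0 ltr0n; have := enum_valP j; rewrite inE. Qed.

Lemma nlap_incmx A : oriented_simple A ->
  nlap R (vsupp A) A =
  diag_mx (invdeg (vsupp A) A) *m (incmx (vsupp A) A *m (incmx (vsupp A) A)^T).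
Proof.
move=> osA; apply/matrixP => i j; rewrite mul_diag_mx !mxE.
under eq_bigr do rewrite !mxE.
rewrite (sum_enum A (fun a => inc R (enum_val i) a * inc R (enum_val j) a)).
rewrite sum_inc_mul // (inj_eq enum_val_inj).
have [->|ij] := eqVneq i j; last by rewrite mulrN mulrC sub0r.
have -> : adj A (enum_val j) (enum_val j) = false.
  by rewrite /adj orbb; apply/negP => /osA []; rewrite eqxx.
rewrite mul0r subr0 mulVf // pnatr_eq0 -lt0n.
by have := enum_valP j; rewrite inE.
Qed.

Lemma edgeLap_incmx A :
  edgeLap R A =
  (incmx (vsupp A) A)^T *m diag_mx (invdeg (vsupp A) A) *m incmx (vsupp A) A.
Proof.
apply/matrixP => i j; rewrite mul_mx_diag !mxE.
under eq_bigr do rewrite !mxE -mulrA.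
rewrite (sum_enum (vsupp A) (fun x => inc R x (enum_val i) *
   (((deg A x)%:R)^-1 * inc R x (enum_val j)))).
have iA := enum_valP i.
by rewrite sum_inc_mulr ?fst_vsupp ?snd_vsupp // ![_^-1 * _]mulrC.
Qed.

Lemma adj_connect_sym A : connect_sym (adj A).
Proof. by apply: sym_connect_sym => x y; rewrite /adj orbC. Qed.

Definition comp_roots A : {set V} := [set x | fingraph.root (adj A) x == x].

Lemma card_comp_roots A : #|comp_roots A| = ncomp A.
Proof. by rewrite /ncomp; apply: eq_card => x; rewrite !inE andbT. Qed.

Definition compmx A : 'M[R]_(#|comp_roots A|, #|[set: V]|) :=
  \matrix_(r, k) (fingraph.root (adj A) (enum_val k) == enum_val r)%:R.

Lemma mxrank_compmx A : \rank (compmx A) = ncomp A.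
Proof.
pose P : 'M[R]_(#|[set: V]|, #|comp_roots A|) :=
  \matrix_(k, r) (enum_val k == enum_val r)%:R.
have compmxK : compmx A *m P = 1%:M.
  apply/matrixP => r s; rewrite !mxE.
  under eq_bigr do rewrite !mxE mulrC.
  rewrite (sum_enum _ (fun x => (x == enum_val s)%:R *
                                (fingraph.root (adj A) x == enum_val r)%:R)).
  rewrite sum_delta_mul ?in_setT //.
  have := enum_valP s; rewrite inE => /eqP ->.
  by rewrite (inj_eq enum_val_inj) eq_sym.
apply/eqP; rewrite -card_comp_roots eqn_leq rank_leq_row.
by rewrite -{1}(mxrank1 R #|comp_roots A|) -compmxK mxrankM_maxl.
Qed.

Lemma compmx_incmx A : compmx A *m incmx [set: V] A = 0.
Proof.
apply/matrixP => r j; rewrite !mxE.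
under eq_bigr do rewrite !mxE mulrC.
rewrite (sum_enum _ (fun x => inc R x (enum_val j) *
                              (fingraph.root (adj A) x == enum_val r)%:R)).
rewrite sum_inc_mulr ?in_setT //.
have : adj A (enum_val j).1 (enum_val j).2.
  by rewrite /adj -surjective_pairing enum_valP.
by move/connect1/(fingraph.rootP (adj_connect_sym A)) => ->; rewrite subrr.
Qed.

(* A vector in the left kernel of the incidence matrix takes equal values at
   the two ends of every edge, hence is constant on components. *)
Lemma kermx_incmx_sub A : (kermx (incmx [set: V] A) <= compmx A)%MS.
Proof.
apply/row_subP => i; set u := row i _.
have uB0 : u *m incmx [set: V] A = 0 by rewrite -row_mul mulmx_ker row0.
clearbody u; pose f : V -> R := fun x => u 0 (enum_rank_in (in_setT x) x).
have f_edge a : a \in A -> f a.1 = f a.2.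
  move=> aA.
  have := congr1 (fun M : 'M_(1, #|A|) => M 0 (enum_rank_in aA a)) uB0.
  rewrite !mxE (eq_bigr (fun k => inc R (enum_val k) a * f (enum_val k))).
    rewrite (sum_enum _ (fun x => inc R x a * f x)) sum_inc_mulr ?in_setT //.
    by move/subr0_eq.
  by move=> k _; rewrite !mxE enum_rankK_in // /f enum_valK_in mulrC.
have f_root x : f (fingraph.root (adj A) x) = f x.
  have closed_f : closed (adj A) [pred z | f z == f x].
    by move=> y z; rewrite /adj !inE => /orP[] /f_edge /= ->.
  have := closed_connect closed_f (fingraph.connect_root _ x).
  by rewrite !inE eqxx => /esym/eqP.
apply/submxP; exists (\row_r f (enum_val r)); apply/rowP => k; rewrite !mxE.
rewrite (eq_bigr (fun r => (enum_val r == fingraph.root (adj A) (enum_val k))%:R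
                           * f (enum_val r))); last first.
  by move=> r _; rewrite !mxE eq_sym mulrC.
rewrite (sum_enum _ (fun y =>
  (y == fingraph.root (adj A) (enum_val k))%:R * f y)).
rewrite sum_delta_mul ?inE ?(fingraph.root_root (adj_connect_sym A)) //.
by rewrite f_root /f enum_valK_in.
Qed.

Lemma mxrank_incmxT A : \rank (incmx [set: V] A) = grank A.
Proof.
have ker_ge := mxrankS (kermx_incmx_sub A).
have ker_le : (compmx A <= kermx (incmx [set: V] A))%MS.
  by rewrite sub_kermx compmx_incmx.
move: ker_ge (mxrankS ker_le) (rank_leq_row (incmx [set: V] A)).
rewrite mxrank_ker mxrank_compmx /grank -(cardsT V); lia.
Qed.

Lemma inc_notin_vsupp A x a : x \notin vsupp A -> a \in A -> inc R x a = 0.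
Proof.
move=> xNA aA; rewrite /inc.
have /negPf -> : x != a.1 by apply: contraNneq xNA => ->; exact: fst_vsupp.
have /negPf -> : x != a.2 by apply: contraNneq xNA => ->; exact: snd_vsupp.
by rewrite subrr.
Qed.

(* Rows of vertices outside vsupp A vanish, so any row set S containing
   vsupp A gives the same rank. *)
Lemma mxrank_incmx S A : vsupp A \subset S -> \rank (incmx S A) = grank A.
Proof.
move=> sAS; rewrite -mxrank_incmxT.
pose P1 : 'M[R]_(#|S|, #|[set: V]|) :=
  \matrix_(i, k) (enum_val k == enum_val i)%:R.
pose P2 : 'M[R]_(#|[set: V]|, #|S|) :=
  \matrix_(k, i) (enum_val i == enum_val k)%:R.
have restrict : P1 *m incmx [set: V] A = incmx S A.
  apply/matrixP => i j; rewrite !mxE; under eq_bigr do rewrite !mxE.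
  rewrite (sum_enum _ (fun x => (x == enum_val i)%:R * inc R x (enum_val j))).
  by rewrite sum_delta_mul ?in_setT.
have extend : P2 *m incmx S A = incmx [set: V] A.
  apply/matrixP => k j; rewrite !mxE; under eq_bigr do rewrite !mxE.
  rewrite (sum_enum _ (fun x => (x == enum_val k)%:R * inc R x (enum_val j))).
  have [kS|kNS] := boolP (enum_val k \in S); first by rewrite sum_delta_mul.
  rewrite big1 ?(inc_notin_vsupp _ (enum_valP j)) //.
    exact: contra (subsetP sAS _) kNS.
  by move=> x xS; rewrite (_ : (x == _) = false) ?mul0r //;
    apply: contraNF kNS => /eqP <-.
apply/eqP; rewrite eqn_leq; apply/andP; split.
  by rewrite -restrict mxrankM_maxr.
by rewrite -{1}extend mxrankM_maxr.
Qed.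

End Incidence.

Section Laplacians.
Variables (R : realFieldType) (V : finType).
Implicit Types A E : {set V * V}.

Lemma mxrank_LapR A : oriented_simple A -> \rank (LapR R A) = grank A.
Proof.
move=> osA; rewrite /LapR nlap_incmx // eqmxMfull.
  by rewrite mxrank_mul_tr mxrank_incmx.
rewrite row_full_unit unitmxE det_diag unitfE; apply/prodf_neq0 => i _.
by rewrite gt_eqF ?invdeg_gt0.
Qed.

Lemma mxrank_LapG E : oriented_simple E -> (forall v, 0 < deg E v)%N ->
  \rank (LapG R E) = grank E.
Proof.
move=> osE degE; have suppE : vsupp E = [set: V].
  by apply/setP => x; rewrite !inE degE.
by rewrite /LapG -suppE mxrank_LapR.
Qed.

Lemma mxrank_edgeLap A : \rank (edgeLap R A) = grank A.
Proof.
rewrite edgeLap_incmx -{2}(trmxK (incmx R (vsupp A) A)).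
by rewrite mxrank_mul_diag_tr ?mxrank_tr ?mxrank_incmx //; exact: invdeg_gt0.
Qed.

Lemma n0_edgeLap A : n0 (edgeLap R A) = (#|A| - grank A)%N.
Proof.
rewrite /n0 mup0_char_poly -?mxrank_edgeLap //.
have edgeLap_sym : (edgeLap R A)^T = edgeLap R A.
  by rewrite edgeLap_incmx !trmx_mul trmxK tr_diag_mx mulmxA.
by rewrite -{2}edgeLap_sym mxrank_mul_tr.
Qed.

Lemma grank_gt0 A : oriented_simple A -> A != set0 -> (0 < grank A)%N.
Proof.
move=> osA /set0Pn [a aA]; have a1 := fst_vsupp aA.
rewrite -(mxrank_incmx rat (subxx _)) lt0n mxrank_eq0; apply/eqP.
move/matrixP/(_ (enum_rank_in a1 a.1) (enum_rank_in aA a)).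
rewrite !mxE !enum_rankK_in // /inc eqxx.
have aA' : (a.1, a.2) \in A by rewrite -surjective_pairing.
have [/negPf -> _] := osA a.1 a.2 aA'.
by rewrite subr0 => /eqP; rewrite oner_eq0.
Qed.

Lemma grank_le_card A : (grank A <= #|A|)%N.
Proof. by rewrite -(mxrank_incmx rat (subxx _)) rank_leq_col. Qed.

End Laplacians.

Section Conditions.
Variables (R : realFieldType) (V : finType) (E A : {set V * V}).
Hypotheses (osE : oriented_simple E) (sAE : A \subset E) (A0 : A != set0).

Let osA : oriented_simple A := oriented_simple_sub osE sAE.

Let E0 : E != set0.
Proof. by apply: contraNneq A0 => E0; rewrite -subset0 -E0. Qed.

Let grankA_gt0 : (0 < grank A)%N := grank_gt0 osA A0.
Let grankE_gt0 : (0 < grank E)%N := grank_gt0 osE E0.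
Let cardA_gt0 : (0 < #|A|)%N. Proof. by rewrite card_gt0. Qed.
Let cardE_gt0 : (0 < #|E|)%N. Proof. by rewrite card_gt0. Qed.

Lemma rho_le_rhoE :
  (rho R A <= rho R E) = (#|A| * grank E <= grank A * #|E|)%N.
Proof.
rewrite /rho ler_pdivrMr ?ltr0n // mulrAC ler_pdivlMr ?ltr0n //.
by rewrite -!natrM ler_nat (mulnC #|E|).
Qed.

Lemma rank_gap_le : (forall v, 0 < deg E v)%N ->
  ((\rank (LapG R E))%:R - (\rank (LapR R A))%:R
     <= (#|E|%:R - #|A|%:R) / rho R E :> R)
  = (#|A| * grank E <= grank A * #|E|)%N.
Proof.
move=> degE; rewrite mxrank_LapG // mxrank_LapR // /rho invf_div mulrA.
rewrite ler_pdivlMr ?ltr0n // -subr_ge0 -(ler_nat R) !natrM -subr_ge0.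
by congr (0 <= _); ring.
Qed.

Lemma n0_ratio_le :
  ((n0 (edgeLap R A))%:R / #|A|%:R <= (n0 (edgeLap R E))%:R / #|E|%:R :> R)
  = (#|A| * grank E <= grank A * #|E|)%N.
Proof.
rewrite !n0_edgeLap !(natrB _ (grank_le_card _)) ler_pdivrMr ?ltr0n //.
rewrite mulrAC ler_pdivlMr ?ltr0n // -subr_ge0 -(ler_nat R) !natrM -subr_ge0.
by congr (0 <= _); ring.
Qed.

End Conditions.

Theorem theorem3p15 (R : realFieldType) (V : finType) (E : {set V * V}) :
  oriented_simple E ->
  E != set0 ->
  (forall v : V, (0 < deg E v)%N) ->
  [<-> uniformly_dense R E;
       forall A : {set V * V}, A \subset E -> A != set0 ->
         (\rank (LapG R E))%:R - (\rank (LapR R A))%:R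
           <= (#|E|%:R - #|A|%:R) / rho R E;
       forall A : {set V * V}, A \subset E -> A != set0 ->
         (n0 (edgeLap R A))%:R / #|A|%:R
           <= (n0 (edgeLap R E))%:R / #|E|%:R :> R].
Proof.
move=> osE _ degE.
tfae=> cond A sAE A0.
- by rewrite rank_gap_le // -(rho_le_rhoE R) //; exact: cond.
- by rewrite n0_ratio_le // -(rank_gap_le R) //; exact: cond.
- by rewrite rho_le_rhoE // -(n0_ratio_le R) //; exact: cond.
Qed.
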